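(* Let $\mathbf{L}$ be a finite distributive lattice and $m,n\ge1$ integers. Let $\mathbf{D}_{n,m}:=(\mathbf{2}^n)^m$, where $\mathbf{2}^n$ is the Boolean lattice with $n$ atoms, and let $P_{n,m}\subseteq\mathbf{D}_{n,m}$ be the set of tuples $(a_1,\dots,a_m)$ with $a_i\neq 0$ for every $i$. Then a subset $F\subseteq\mathbf{L}$ is an $m$-prime $n$-filter if and only if $F=h^{-1}[P_{n,m}]$ for some lattice homomorphism $h\colon\mathbf{L}\to\mathbf{D}_{n,m}$.
   Context: For a set $X$, $Y\subseteq_n X$ means $Y$ is a non-empty subset of $X$ with $|Y|\le n$. An $n$-filter on a lattice is an upset $F$ such that for every non-empty finite $X\subseteq F$: if $\bigwedge Y\in F$ for every $Y\subseteq_n X$ then $\bigwedge X\in F$. The $n$-filters of $\mathbf{L}$ form a lattice $\mathrm{Fi}_n\mathbf{L}$ under inclusion. An $n$-filter $F$ is $m$-prime if for every non-empty finite family $(F_i)_{i\in I}$ of $n$-filters with $\bigcap_{i\in I}F_i\subseteq F$ there is $J\subseteq I$ with $1\le|J|\le m$ and $\bigcap_{j\in J}F_j\subseteq F$. The empty set and $\mathbf{L}$ count as $m$-prime $n$-filters. Lattice homomorphisms need not preserve bounds. *)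

From mathcomp Require Import all_boot all_order.
Set Implicit Arguments. Unset Strict Implicit. Unset Printing Implicit Defensive.
Import Order.LTheory.
Local Open Scope order_scope.

Section Defs.
Variables (d : Order.disp_t) (L : finDistrLatticeType d).

(* meet of a finite set X, computed with base element x0 (= meet X when x0 \in X) *)
Definition bigmeet_from (x0 : L) (X : {set L}) : L := \big[Order.meet/x0]_(y in X) y.

(* "the meet of the non-empty set X belongs to F" *)
Definition meet_in (F X : {set L}) : Prop :=
  exists2 x0, x0 \in X & bigmeet_from x0 X \in F.

Definition upset (F : {set L}) : Prop :=
  forall x y : L, x <= y -> x \in F -> y \in F.

Definition nfilter (n : nat) (F : {set L}) : Prop :=
  upset F /\
  forall X : {set L}, X != set0 -> X \subset F ->
    (forall Y : {set L}, Y != set0 -> Y \subset X -> (#|Y| <= n)%N -> meet_in F Y) ->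
    meet_in F X.

(* m-prime n-filter; the empty set and the whole lattice count as such.
   Non-empty finite families are indexed by 'I_k.+1. *)
Definition mprime_nfilter (m n : nat) (F : {set L}) : Prop :=
  F = set0 \/ F = setT \/
  (nfilter n F /\
   forall (k : nat) (Fs : 'I_k.+1 -> {set L}),
     (forall i, nfilter n (Fs i)) ->
     \bigcap_(i : 'I_k.+1) Fs i \subset F ->
     exists J : {set 'I_k.+1}, (0 < #|J| <= m)%N /\ \bigcap_(j in J) Fs j \subset F).
End Defs.

(* D_{n,m} = (2^n)^m, represented as {ffun 'I_m -> {set 'I_n}} with
   componentwise intersection/union as meet/join. *)
Definition Dnm (n m : nat) := {ffun 'I_m -> {set 'I_n}}.

Definition Pnm (n m : nat) : {set Dnm n m} := [set a : Dnm n m | [forall i, a i != set0]].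

(* lattice homomorphisms (bounds not required to be preserved) *)
Definition lattice_hom d (L : finDistrLatticeType d) (n m : nat) (h : L -> Dnm n m) : Prop :=
  (forall x y : L, h (Order.meet x y) = [ffun i => h x i :&: h y i]) /\
  (forall x y : L, h (Order.join x y) = [ffun i => h x i :|: h y i]).

From mathcomp Require Import all_boot all_order.
Set Implicit Arguments. Unset Strict Implicit. Unset Printing Implicit Defensive.
Import Order.LTheory.
Local Open Scope order_scope.

(* The support {z | g z <> 0} of a lattice homomorphism g : L -> 2^n is an
   n-filter, and it is prime for upsets: if finitely many upsets have their
   intersection inside it, one of them lies inside it (otherwise the join of
   witnesses is a counterexample). As h^-1[P_{n,m}] is the intersection of the
   supports of the m coordinates of h, it is an m-prime n-filter.
   Conversely, an element x outside an n-filter F is the meet of the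
   meet-prime elements above it, and the n-filter axiom picks at most n of
   them whose meet is still outside F; the complements of their principal
   ideals form a homomorphism into 2^n whose support contains F but not x.
   The intersection of these supports over all x is F, and m-primeness of F
   keeps only m of them, i.e. a homomorphism into (2^n)^m. *)

Section BigMeet.
Variables (d : Order.disp_t) (L : latticeType d).

Lemma big_meet_le (I : finType) (P : {pred I}) (F : I -> L) x0 i :
  P i -> \big[Order.meet/x0]_(j | P j) F j <= F i.
Proof.
move=> Pi; have : i \in index_enum I by rewrite mem_index_enum.
elim: (index_enum I) => [|a r IH] //; rewrite big_cons inE.
case/orP=> [/eqP<-|ir]; first by rewrite Pi leIl.
by case: (P a); [apply: le_trans (leIr _ _) (IH ir) | apply: IH].
Qed.

End BigMeet.

Lemma big_join_ge d (L : latticeType d) (I : finType) (P : {pred I}) (F : I -> L) x0 i :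
  P i -> F i <= \big[Order.join/x0]_(j | P j) F j.
Proof. exact: (@big_meet_le _ L^d). Qed.

Lemma ord_imset_onto (T : finType) (Y : {set T}) k :
  Y != set0 -> (#|Y| <= k)%N -> exists s : 'I_k -> T, [set s i | i : 'I_k] = Y.
Proof.
case/set0Pn=> y0 y0Y Yk; exists (fun i => nth y0 (enum Y) i).
apply/setP => y; apply/imsetP/idP => [[i _ ->]|yY].
  have [iY|iY] := ltnP i (size (enum Y)); last by rewrite nth_default.
  by rewrite -mem_enum mem_nth.
have yk : (index y (enum Y) < k)%N.
  by rewrite (leq_trans _ Yk) // cardE index_mem mem_enum.
by exists (Ordinal yk); rewrite //= nth_index ?mem_enum.
Qed.

Section Filters.
Variables (d : Order.disp_t) (L : finDistrLatticeType d).
Implicit Types (x y z : L) (X Y F : {set L}).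

Lemma bigmeet_from_le x0 X y : y \in X -> bigmeet_from x0 X <= y.
Proof. exact: big_meet_le. Qed.

Lemma le_bigmeet_from x0 X z : x0 \in X -> (forall y, y \in X -> z <= y) ->
  z <= bigmeet_from x0 X.
Proof.
move=> x0X zX; apply: (big_ind (fun b => z <= b)); first exact: zX.
  by move=> a b za zb; rewrite lexI za zb.
exact: zX.
Qed.

Lemma bigmeet_from_id x0 x1 X : x0 \in X -> x1 \in X ->
  bigmeet_from x0 X = bigmeet_from x1 X.
Proof.
move=> x0X x1X; apply: le_anti.
by rewrite !le_bigmeet_from // => y; apply: bigmeet_from_le.
Qed.

Lemma meet_inE F X x0 : x0 \in X -> meet_in F X <-> bigmeet_from x0 X \in F.
Proof.
move=> x0X; split; last by exists x0.
by case=> x1 x1X; rewrite (bigmeet_from_id x0X x1X).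
Qed.

Lemma nfilter_bigcap n (I : finType) (Fs : I -> {set L}) :
  (forall i, nfilter n (Fs i)) -> nfilter n (\bigcap_i Fs i).
Proof.
move=> Fs_filter; split.
  move=> x y xy /bigcapP xF; apply/bigcapP => i _.
  exact: (Fs_filter i).1 _ _ xy (xF i isT).
move=> X /set0Pn[x0 x0X] XF meetY; apply/(meet_inE _ x0X)/bigcapP => i _.
have XFi : X \subset Fs i by apply: subset_trans XF (bigcap_inf i isT).
apply/(meet_inE _ x0X); apply: (Fs_filter i).2 => // [|Y Y0 YX Yn].
  by apply/set0Pn; exists x0.
have [y0 y0Y meetYF] := meetY Y Y0 YX Yn.
by exists y0 => //; apply: subsetP meetYF; apply: bigcap_inf.
Qed.

Lemma nfilter_small_meet n F X x0 : (0 < n)%N -> nfilter n F -> x0 \in X ->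
  bigmeet_from x0 X \notin F ->
  exists Y y0, [/\ y0 \in Y, Y \subset X, (#|Y| <= n)%N & bigmeet_from y0 Y \notin F].
Proof.
move=> n_gt0 [Fup Fmeet] x0X meetXF.
have [XF|/subsetPn[y yX yF]] := boolP (X \subset F); last first.
  exists [set y], y; rewrite set11 sub1set yX cards1 n_gt0; split=> //.
  by apply: contra yF; apply: Fup; apply: bigmeet_from_le; rewrite set11.
suff /existsP[Y /existsP[y0 /and4P[y0Y YX Yn meetYF]]] :
    [exists Y : {set L}, [exists y0 in Y,
       [&& Y \subset X, (#|Y| <= n)%N & bigmeet_from y0 Y \notin F]]].
  by exists Y, y0.
apply: contraNT meetXF => /existsPn noY.
apply/(meet_inE _ x0X); apply: Fmeet => // [|Y Y0 YX Yn].
  by apply/set0Pn; exists x0.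
case/set0Pn: Y0 => y0 y0Y; exists y0 => //.
by have /existsPn/(_ y0) := noY Y; rewrite y0Y YX Yn negbK.
Qed.

Definition meet_prime y :=
  [forall a : L, forall b : L, (a `&` b <= y) ==> (a <= y) || (b <= y)].

Lemma meet_prime_leI y a b : meet_prime y -> (a `&` b <= y) = (a <= y) || (b <= y).
Proof.
move=> /forallP /(_ a) /forallP /(_ b) /implyP primey; apply/idP/idP => [|/orP[]];
  by [apply: primey | move/(le_trans (leIl _ _)) | move/(le_trans (leIr _ _))].
Qed.

Lemma maximal_avoiding_meet_prime y z : ~~ (z <= y) ->
  (forall y', y <= y' -> ~~ (z <= y') -> y' <= y) -> meet_prime y.
Proof.
move=> zy ymax; apply/forallP => a; apply/forallP => b; apply/implyP => aby.
apply: contraT; rewrite negb_or => /andP[ay by_].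
(* by maximality z lies below both y `|` a and y `|` b, hence below their meet y *)
have zyU c : ~~ (c <= y) -> z <= y `|` c.
  move=> cy; apply: contraT => zyc.
  by move: (ymax _ (leUl _ _) zyc); rewrite leUx lexx (negbTE cy).
have : z <= (y `|` a) `&` (y `|` b) by rewrite lexI !zyU.
by rewrite -joinIr (join_idPl aby) (negbTE zy).
Qed.

Lemma meet_prime_separation x z : ~~ (z <= x) ->
  exists y, [/\ x <= y, meet_prime y & ~~ (z <= y)].
Proof.
move=> zx; pose avoid y := (x <= y) && ~~ (z <= y).
pose down y := [set w : L | w <= y].
have avoid_x : avoid x by rewrite /avoid lexx zx.
have [y /andP[xy zy] ymax] := arg_maxnP (fun y => #|down y|) avoid_x.
exists y; split=> //; apply: (maximal_avoiding_meet_prime zy) => y' yy' zy'.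
have sub : down y \subset down y'.
  by apply/subsetP => w; rewrite !inE => wy; apply: le_trans wy yy'.
have card_le : (#|down y'| <= #|down y|)%N.
  by apply: ymax; rewrite /avoid (le_trans xy yy') zy'.
have down_eq : down y = down y' by apply/eqP; rewrite eqEcard sub card_le.
have : y' \in down y' by rewrite inE.
by rewrite -down_eq inE.
Qed.

Lemma bigmeet_meet_primes_le x y1 :
  let M := [set y | (x <= y) && meet_prime y] in
  y1 \in M -> bigmeet_from y1 M <= x.
Proof.
move=> M y1M; apply: contraT => /meet_prime_separation[y [xy primey]].
by rewrite bigmeet_from_le // inE xy primey.
Qed.

Definition set_lattice_hom n (g : L -> {set 'I_n}) :=
  {morph g : a b / a `&` b >-> a :&: b} /\ {morph g : a b / a `|` b >-> a :|: b}.

Lemma set_lattice_hom_const n (A : {set 'I_n}) : set_lattice_hom (fun _ : L => A).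
Proof. by split=> a b; rewrite ?setIid ?setUid. Qed.

Definition supp n (g : L -> {set 'I_n}) : {set L} := [set z | g z != set0].

Section SetLatticeHom.
Variables (n : nat) (g : L -> {set 'I_n}).
Hypothesis g_hom : set_lattice_hom g.

Lemma set_lattice_hom_homo : {homo g : a b / a <= b >-> a \subset b}.
Proof. by move=> a b /join_idPr <-; rewrite g_hom.2 subsetUl. Qed.

Lemma set_lattice_hom_bigmeet x0 X : x0 \in X ->
  g (bigmeet_from x0 X) = \bigcap_(x in X) g x.
Proof.
move=> x0X; apply/setP => j; apply/idP/bigcapP => [jg x xX|jX].
  by apply: subsetP jg; apply/set_lattice_hom_homo/bigmeet_from_le.
apply: (big_ind (fun c => j \in g c)); first exact: jX.
  by move=> a b ja jb; rewrite g_hom.1 inE ja jb.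
exact: jX.
Qed.

Lemma supp_nfilter : (0 < n)%N -> nfilter n (supp g).
Proof.
move=> n_gt0; split.
  move=> x y xy; rewrite !inE; apply: contraNN; rewrite -!subset0.
  exact/subset_trans/set_lattice_hom_homo.
move=> X /set0Pn[x0 x0X] _ meetY; exists x0 => //.
rewrite inE set_lattice_hom_bigmeet //; apply: contraT; rewrite negbK => /eqP capX0.
(* if no coordinate is common to all of X, n witnesses already kill every one *)
have /fin_all_exists[xs xsP] j : exists x, (x \in X) && (j \notin g x).
  apply/existsP; apply: contraT => /existsPn jX.
  by rewrite -(in_set0 j) -capX0; apply/bigcapP => x xX; move: (jX x); rewrite xX negbK.
pose Y := [set xs j | j : 'I_n].
have Y0 : Y != set0 by apply/set0Pn; exists (xs (Ordinal n_gt0)); apply: imset_f.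
have YX : Y \subset X by apply/subsetP => _ /imsetP[j _ ->]; case/andP: (xsP j).
have Yn : (#|Y| <= n)%N by rewrite (leq_trans (leq_imset_card _ _)) ?card_ord.
have [y0 y0Y] := meetY Y Y0 YX Yn.
rewrite inE set_lattice_hom_bigmeet // => /set0Pn[j /bigcapP jY].
by case/andP: (xsP j) => _; rewrite jY ?imset_f.
Qed.

Lemma supp_prime (I : finType) (i0 : I) (Fs : I -> {set L}) :
  (forall i, upset (Fs i)) -> \bigcap_i Fs i \subset supp g ->
  exists i, Fs i \subset supp g.
Proof.
move=> Fs_up capF; apply/existsP; apply: contraT => /existsPn noFs.
have /fin_all_exists[xs xsP] i : exists x, (x \in Fs i) && (x \notin supp g).
  by case/subsetPn: (noFs i) => x xF xg; exists x; rewrite xF.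
(* the join of the witnesses lies in every Fs i, yet g maps it to the empty set *)
pose z := \big[Order.join/xs i0]_i xs i.
have : z \in supp g.
  apply/(subsetP capF)/bigcapP => i _.
  by case/andP: (xsP i) => xF _; apply: (Fs_up _ _ _ _ xF); apply: big_join_ge.
suff /eqP gz0 : g z == set0 by rewrite inE gz0 eqxx.
apply: (big_ind (fun c => g c == set0)).
- by case/andP: (xsP i0); rewrite inE negbK.
- by move=> a b /eqP ga /eqP gb; rewrite g_hom.2 ga gb setU0.
- by move=> i _; case/andP: (xsP i); rewrite inE negbK.
Qed.

End SetLatticeHom.

Lemma meet_prime_set_lattice_hom n (s : 'I_n -> L) : (forall j, meet_prime (s j)) ->
  set_lattice_hom (fun z => [set j | ~~ (z <= s j)]).
Proof.
move=> s_prime; split=> a b; apply/setP => j; rewrite !inE.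
  by rewrite (meet_prime_leI _ _ (s_prime j)) negb_or.
by rewrite leUx negb_and.
Qed.

Lemma nfilter_separation n F x : (0 < n)%N -> nfilter n F -> x \notin F ->
  exists g : L -> {set 'I_n}, [/\ set_lattice_hom g, F \subset supp g & x \notin supp g].
Proof.
move=> n_gt0 F_filter xF; have Fup := F_filter.1.
have [->|[f fF]] := set_0Vmem F.
  exists (fun=> set0); rewrite sub0set inE eqxx; split=> //.
  exact: set_lattice_hom_const.
pose M := [set y | (x <= y) && meet_prime y].
have [y1 [xy1 prime1 _]] : exists y, [/\ x <= y, meet_prime y & ~~ (f <= y)].
  by apply: meet_prime_separation; apply: contra xF => fx; apply: Fup fx fF.
have y1M : y1 \in M by rewrite inE xy1 prime1.
have meetMF : bigmeet_from y1 M \notin F.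
  by apply: contra xF; apply: Fup; apply: bigmeet_meet_primes_le.
have [Y [y0 [y0Y YM Yn meetYF]]] := nfilter_small_meet n_gt0 F_filter y1M meetMF.
have [|s sY] := ord_imset_onto _ Yn; first by apply/set0Pn; exists y0.
have sM j : s j \in M by apply/(subsetP YM); rewrite -sY imset_f.
exists (fun z => [set j | ~~ (z <= s j)]); split.
- by apply: meet_prime_set_lattice_hom => j; case/setIdP: (sM j).
- apply/subsetP => f' f'F; rewrite inE; apply: contraNT meetYF.
  rewrite negbK => /eqP f'0.
  apply: Fup f'F; apply: le_bigmeet_from => // y; rewrite -sY => /imsetP[j _ ->].
  by apply: contraT => f'j; rewrite -(in_set0 j) -f'0 inE f'j.
- rewrite inE negbK; apply/eqP/setP => j; rewrite !inE.
  by case/setIdP: (sM j) => ->.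
Qed.

Lemma preimage_Pnm_bigcap n m (h : L -> Dnm n m) :
  [set x | h x \in Pnm n m] = \bigcap_(i : 'I_m) supp (fun x => h x i).
Proof.
apply/setP => x; rewrite !inE; apply/forallP/bigcapP => [xh i _|xh i].
  by rewrite inE xh.
by have := xh i isT; rewrite inE.
Qed.

Lemma lattice_hom_coord n m (h : L -> Dnm n m) i :
  lattice_hom h -> set_lattice_hom (fun x => h x i).
Proof. by case=> hI hU; split=> a b; rewrite ?hI ?hU ffunE. Qed.

Lemma lattice_hom_ffun n m (g : 'I_m -> L -> {set 'I_n}) :
  (forall i, set_lattice_hom (g i)) -> lattice_hom (fun x => [ffun i => g i x]).
Proof.
by move=> g_hom; split=> a b; apply/ffunP => i; rewrite !ffunE ?(g_hom i).1 ?(g_hom i).2.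
Qed.

Lemma preimage_Pnm_set0 n m : (0 < m)%N ->
  exists h : L -> Dnm n m, lattice_hom h /\ set0 = [set x | h x \in Pnm n m].
Proof.
move=> m_gt0; exists (fun=> [ffun=> set0]); split.
  exact: (lattice_hom_ffun (fun=> set_lattice_hom_const set0)).
apply/setP => x; rewrite !inE; apply/esym/forallPn.
by exists (Ordinal m_gt0); rewrite ffunE eqxx.
Qed.

Lemma preimage_Pnm_setT n m : (0 < n)%N ->
  exists h : L -> Dnm n m, lattice_hom h /\ setT = [set x | h x \in Pnm n m].
Proof.
move=> n_gt0; exists (fun=> [ffun=> setT]); split.
  exact: (lattice_hom_ffun (fun=> set_lattice_hom_const setT)).
apply/setP => x; rewrite !inE; apply/esym/forallP => i.
by rewrite ffunE; apply/set0Pn; exists (Ordinal n_gt0).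
Qed.

Lemma preimage_Pnm_mprime n m (h : L -> Dnm n m) : (0 < n)%N -> (0 < m)%N ->
  lattice_hom h -> mprime_nfilter m n [set x | h x \in Pnm n m].
Proof.
move=> n_gt0 m_gt0 h_hom; right; right; rewrite preimage_Pnm_bigcap.
split.
  by apply: nfilter_bigcap => i; apply: supp_nfilter (lattice_hom_coord i h_hom) n_gt0.
move=> k Fs Fs_filter capF.
have /fin_all_exists[l lP] i : exists l, Fs l \subset supp (fun x => h x i).
  apply: (supp_prime (lattice_hom_coord i h_hom) ord0) => [l|].
    exact: (Fs_filter l).1.
  exact: subset_trans capF (bigcap_inf i isT).
exists [set l i | i : 'I_m]; split.
  rewrite card_gt0 (leq_trans (leq_imset_card _ _)) ?card_ord // andbT.
  by apply/set0Pn; exists (l (Ordinal m_gt0)); apply: imset_f.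
apply/bigcapsP => i _; apply: subset_trans (lP i); apply: bigcap_inf.
exact: imset_f.
Qed.

Definition mprime_family m n F := forall (k : nat) (Fs : 'I_k.+1 -> {set L}),
  (forall i, nfilter n (Fs i)) -> \bigcap_(i : 'I_k.+1) Fs i \subset F ->
  exists J : {set 'I_k.+1}, (0 < #|J| <= m)%N /\ \bigcap_(j in J) Fs j \subset F.

Lemma mprime_family_finType m n F (I : finType) (i0 : I) (Fs : I -> {set L}) :
  mprime_family m n F -> (forall i, nfilter n (Fs i)) -> \bigcap_i Fs i \subset F ->
  exists J : {set I}, (0 < #|J| <= m)%N /\ \bigcap_(j in J) Fs j \subset F.
Proof.
move=> F_prime Fs_filter capF.
have cardI : #|I| = #|I|.-1.+1 by rewrite prednK //; apply/card_gt0P; exists i0.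
pose e (l : 'I_#|I|.-1.+1) := enum_val (cast_ord (esym cardI) l).
have [|J [/andP[J0 Jm] capJ]] := F_prime _ (Fs \o e) (fun l => Fs_filter (e l)).
  apply: subset_trans capF; apply/subsetP => x /bigcapP xFs; apply/bigcapP => i _.
  by have := xFs (cast_ord cardI (enum_rank i)) isT; rewrite /e /= cast_ordK enum_rankK.
exists (e @: J); split.
  by rewrite (leq_trans (leq_imset_card _ _)) // andbT card_gt0 imset_eq0 -card_gt0.
apply: subset_trans capJ; apply/subsetP => x /bigcapP xFs; apply/bigcapP => l lJ.
exact: xFs (imset_f _ lJ).
Qed.

Lemma mprime_preimage_Pnm n m F : (0 < n)%N -> (0 < m)%N ->
  nfilter n F -> mprime_family m n F ->
  exists h : L -> Dnm n m, lattice_hom h /\ F = [set x | h x \in Pnm n m].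
Proof.
move=> n_gt0 m_gt0 F_filter F_prime.
have [->|[f _]] := set_0Vmem F; first exact: preimage_Pnm_set0.
have /fin_all_exists[g gP] z : exists g : L -> {set 'I_n},
    [/\ set_lattice_hom g, F \subset supp g & z \in supp g -> z \in F].
  have [zF|zF] := boolP (z \in F).
    exists (fun=> setT); split=> //; first exact: set_lattice_hom_const.
    by apply/subsetP => y _; rewrite inE; apply/set0Pn; exists (Ordinal n_gt0).
  have [g [g_hom Fg zg]] := nfilter_separation n_gt0 F_filter zF.
  by exists g; split=> // zg'; rewrite zg' in zg.
have g_hom z : set_lattice_hom (g z) by case: (gP z).
have Fg z : F \subset supp (g z) by case: (gP z).
have [|J [/andP[J0 Jm] capJ]] :=
    mprime_family_finType f F_prime (fun z => supp_nfilter (g_hom z) n_gt0).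
  by apply/subsetP => x /bigcapP xg; case: (gP x) => _ _; apply; apply: xg.
have [|s sJ] := ord_imset_onto _ Jm; first by rewrite -card_gt0.
exists (fun x => [ffun i => g (s i) x]); split; first exact: lattice_hom_ffun.
rewrite preimage_Pnm_bigcap; apply/eqP; rewrite eqEsubset; apply/andP; split.
  apply/subsetP => x xF; apply/bigcapP => i _; rewrite inE ffunE.
  by have := subsetP (Fg (s i)) x xF; rewrite inE.
apply: subset_trans capJ; apply/subsetP => x /bigcapP xh; apply/bigcapP => z.
by rewrite -sJ => /imsetP[i _ ->]; have := xh i isT; rewrite !inE ffunE.
Qed.

End Filters.

Close Scope order_scope.

Theorem mainTheorem11 (d : Order.disp_t) (L : finDistrLatticeType d) (n m : nat)
  (hn : 0 < n) (hm : 0 < m) (F : {set L}) :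
  mprime_nfilter m n F <->
  exists h : L -> Dnm n m, lattice_hom h /\ F = [set x | h x \in Pnm n m].
Proof.
split; last by case=> h [h_hom ->]; apply: preimage_Pnm_mprime.
case=> [->|[->|[F_filter F_prime]]].
- exact: preimage_Pnm_set0.
- exact: preimage_Pnm_setT.
- exact: mprime_preimage_Pnm.
Qed.
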